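(* Let $X$ be a finite set, $O$ a finite set, $\mathcal{U}=\{C_1,\dots,C_n\}$ a family of subsets of $X$ with $\bigcup\mathcal{U}=X$, and $e$ an empirical model on $\mathcal{U}$. If $e$ is possibilistically extendable, then $\gamma(s)=0$ for every $k$ and every $s\in S_e(C_k)$. If $e$ is not strongly contextual, then $\gamma(s)=0$ for some $k$ and some $s\in S_e(C_k)$.
   Context: $X$ is discrete; $\mathcal{E}(U)=O^U$ with restriction of functions. An empirical model is a family $\{e_C\}_{C\in\mathcal{U}}$, $e_C$ a probability distribution on $O^C$, with the marginals of $e_C$ and $e_{C'}$ on $C\cap C'$ agreeing for all $C,C'$. For $U$ contained in some $C\in\mathcal{U}$, $e_U$ is the marginal of $e_C$ on $U$ and $S_e(U)=\{s\in O^U:e_U(s)>0\}$. The model is possibilistically extendable if for every $k$ and every $s\in S_e(C_k)$ there is a family $\{s_i\in S_e(C_i)\}_{i=1}^n$ with $s_k=s$ and $s_i|(C_i\cap C_j)=s_j|(C_i\cap C_j)$ for all $i,j$; it is strongly contextual if for every $k$ and every $s\in S_e(C_k)$ no such family exists. $\mathcal{F}=F_{\mathbb{Z}}S_e$: $\mathcal{F}(U)$ is the free abelian group on $S_e(U)$ with restriction $\sum a_ss\mapsto\sum a_s(s|V)$. Čech cochains relative to the nerve (lists $\sigma=(V_0,\dots,V_q)$ of members of $\mathcal{U}$ with $|\sigma|=\bigcap V_l\neq\varnothing$): $C^q(\mathcal{U},\mathcal{G})=\prod_\sigma\mathcal{G}(|\sigma|)$, $\delta^q(\omega)(\sigma)=\sum_{j=0}^{q+1}(-1)^j\omega(\partial_j\sigma)|_{|\sigma|}$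 ($\partial_j$ omits the $j$-th entry), $H^q=\ker\delta^q/\operatorname{im}\delta^{q-1}$. For $U\subseteq X$, $\mathcal{F}_{\bar U}(V)=\{r\in\mathcal{F}(V):r|(U\cap V)=0\}$. Obstruction of $s\in S_e(C_k)$: choose $s_k=s$ and $s_i\in S_e(C_i)$ with $s_i|(C_k\cap C_i)=s|(C_k\cap C_i)$ (possible by compatibility), let $c=(s_1,\dots,s_n)\in C^0(\mathcal{U},\mathcal{F})$, $z=\delta^0(c)$, which is a $1$-cocycle of $C^\bullet(\mathcal{U},\mathcal{F}_{\bar C_k})$; $\gamma(s):=[z]\in H^1(\mathcal{U},\mathcal{F}_{\bar C_k})$. *)

From HB Require Import structures.
From mathcomp Require Import all_boot all_order all_algebra.
From mathcomp Require Export reals.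
Set Implicit Arguments. Unset Strict Implicit. Unset Printing Implicit Defensive.
Import Order.TTheory GRing.Theory Num.Theory.
Local Open Scope ring_scope.

(* A (partial) assignment X -> O.  An element of O^U is encoded as a
   partial function whose domain is exactly U. *)
Definition pf (X O : finType) := {ffun X -> option O}.

Definition dom (X O : finType) (s : pf X O) : {set X} := [set x | s x != None].

Definition restr (X O : finType) (V : {set X}) (s : pf X O) : pf X O :=
  [ffun x => if x \in V then s x else None].

Definition marg (X O : finType) (R : realType) (d : {ffun pf X O -> R})
    (U : {set X}) (t : pf X O) : R :=
  \sum_(s : pf X O | restr U s == t) d s.

(* d is a probability distribution on O^C (encoded as vanishing off the
   sections with domain C) *)
Definition is_distr_on (X O : finType) (R : realType) (C : {set X})
    (d : {ffun pf X O -> R}) : Prop :=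
  (forall s, 0 <= d s) /\ (forall s, d s != 0 -> dom s = C) /\
  \sum_(s : pf X O) d s = 1.

Definition empirical_model (X O : finType) (R : realType) (n : nat)
    (C : 'I_n -> {set X}) (e : 'I_n -> {ffun pf X O -> R}) : Prop :=
  (forall i, is_distr_on (C i) (e i)) /\
  (forall i j t, marg (e i) (C i :&: C j) t = marg (e j) (C i :&: C j) t).

Definition Se (X O : finType) (R : realType) (n : nat)
    (C : 'I_n -> {set X}) (e : 'I_n -> {ffun pf X O -> R})
    (U : {set X}) (t : pf X O) : Prop :=
  dom t = U /\ exists k, U \subset C k /\ 0 < marg (e k) U t.

Definition compatible_family (X O : finType) (R : realType) (n : nat)
    (C : 'I_n -> {set X}) (e : 'I_n -> {ffun pf X O -> R})
    (k : 'I_n) (s : pf X O) (fam : 'I_n -> pf X O) : Prop :=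
  fam k = s /\ (forall i, Se C e (C i) (fam i)) /\
  (forall i j, restr (C i :&: C j) (fam i) = restr (C i :&: C j) (fam j)).

Definition poss_extendable (X O : finType) (R : realType) (n : nat)
    (C : 'I_n -> {set X}) (e : 'I_n -> {ffun pf X O -> R}) : Prop :=
  forall k s, Se C e (C k) s -> exists fam, compatible_family C e k s fam.

Definition strongly_contextual (X O : finType) (R : realType) (n : nat)
    (C : 'I_n -> {set X}) (e : 'I_n -> {ffun pf X O -> R}) : Prop :=
  forall k s, Se C e (C k) s -> ~ exists fam, compatible_family C e k s fam.

(* ---- the presheaf F = F_Z S_e : chains are Z-valued functions on
   sections; F(U) consists of those supported on S_e(U) ---- *)
Definition chain (X O : finType) := {ffun pf X O -> int}.

Definition inF (X O : finType) (R : realType) (n : nat)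
    (C : 'I_n -> {set X}) (e : 'I_n -> {ffun pf X O -> R})
    (U : {set X}) (r : chain X O) : Prop :=
  forall t, r t != 0 -> Se C e U t.

Definition crestr (X O : finType) (V : {set X}) (r : chain X O) : chain X O :=
  [ffun t => \sum_(s : pf X O | restr V s == t) r s].

Definition gen (X O : finType) (s : pf X O) : chain X O :=
  [ffun t => (t == s)%:Z].

Definition inFbar (X O : finType) (R : realType) (n : nat)
    (C : 'I_n -> {set X}) (e : 'I_n -> {ffun pf X O -> R})
    (U V : {set X}) (r : chain X O) : Prop :=
  inF C e V r /\ crestr (U :&: V) r = 0.

Definition support_of (X : finType) (n : nat) (C : 'I_n -> {set X})
    (sigma : seq 'I_n) : {set X} := \bigcap_(i <- sigma) C i.

Definition in_nerve (X : finType) (n : nat) (C : 'I_n -> {set X})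
    (q : nat) (sigma : seq 'I_n) : Prop :=
  size sigma = q.+1 /\ support_of C sigma != set0.

Definition face (n : nat) (j : nat) (sigma : seq 'I_n) : seq 'I_n :=
  take j sigma ++ drop j.+1 sigma.

(* a q-cochain is a function on simplices; only its values on q-simplices
   of the nerve matter (product over the nerve) *)
Definition cochain (X O : finType) (n : nat) := seq 'I_n -> chain X O.

Definition is_cochain (X O : finType) (n : nat) (C : 'I_n -> {set X})
    (G : {set X} -> chain X O -> Prop) (q : nat) (w : cochain X O n) : Prop :=
  forall sigma, in_nerve C q sigma -> G (support_of C sigma) (w sigma).

Definition coboundary (X O : finType) (n : nat) (C : 'I_n -> {set X})
    (w : cochain X O n) : cochain X O n :=
  fun sigma => \sum_(j < size sigma)
      (crestr (support_of C sigma) (w (face j sigma))) *~ ((-1) ^+ j).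

Definition cochain_eq (X O : finType) (n : nat) (C : 'I_n -> {set X})
    (q : nat) (w w' : cochain X O n) : Prop :=
  forall sigma, in_nerve C q sigma -> w sigma = w' sigma.

Definition cochain0_of (X O : finType) (n : nat) (fam : 'I_n -> pf X O)
    : cochain X O n :=
  fun sigma => if sigma is [:: i] then gen (fam i) else 0.

(* gamma(s) = 0 in H^1(U, F_{bar C_k}): for (every) admissible choice of the
   s_i, the cocycle z = delta^0(c) is the coboundary of a 0-cochain of
   C^0(U, F_{bar C_k}).  (The class is independent of the choice.) *)
Definition gamma_zero (X O : finType) (R : realType) (n : nat)
    (C : 'I_n -> {set X}) (e : 'I_n -> {ffun pf X O -> R})
    (k : 'I_n) (s : pf X O) : Prop :=
  forall fam : 'I_n -> pf X O,
    fam k = s ->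
    (forall i, Se C e (C i) (fam i)) ->
    (forall i, restr (C k :&: C i) (fam i) = restr (C k :&: C i) s) ->
    exists c' : cochain X O n,
      is_cochain C (inFbar C e (C k)) 0 c' /\
      cochain_eq C 1 (coboundary C (cochain0_of fam)) (coboundary C c').

From mathcomp Require Import all_boot all_order all_algebra reals.
From Stdlib Require Import Classical.
Import GRing.Theory.
Set Implicit Arguments.
Local Open Scope ring_scope.

(* If [g] is a compatible family through [s], then [gamma(s)] is killed by the
   0-cochain [c - c_g]: its entries [s_i - g_i] restrict to [s - s = 0] on
   [C_k], so they lie in [F_{bar C_k}], and [delta c_g = 0] by compatibility,
   so [delta (c - c_g) = delta c].  Hence extendability of [s] forces
   [gamma(s) = 0], and a model that is not strongly contextual has some
   extendable section. *)

Section Chains.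
Variables X O : finType.

Lemma crestrB V (f g : chain X O) :
  crestr V (f - g) = crestr V f - crestr V g.
Proof.
by apply/ffunP => t; rewrite !ffunE -sumrB; apply: eq_bigr => s _; rewrite !ffunE.
Qed.

Lemma crestr_gen V (a : pf X O) : crestr V (gen a) = gen (restr V a).
Proof.
apply/ffunP => t; rewrite !ffunE big_mkcond (bigD1 a) //= big1 ?addr0.
  rewrite ffunE eqxx; case: eqP => [->|]; first by rewrite eqxx.
  by move=> ne; case: eqP => // eq_t; case: ne.
by move=> s /negbTE sa; rewrite ffunE sa; case: ifP.
Qed.

Lemma gen_subr_eq0 (a b : pf X O) : a = b -> gen a - gen b = 0.
Proof. by move=> ->; rewrite subrr. Qed.

Lemma gen_subr_neq0 (a b : pf X O) t :
  (gen a - gen b) t != 0 -> t = a \/ t = b.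
Proof.
rewrite !ffunE; case: (eqVneq t a) => [|_]; first by left.
by case: (eqVneq t b) => [|_]; [right | rewrite subrr eqxx].
Qed.

End Chains.

Section Coboundary.
Variables (X O : finType) (n : nat) (C : 'I_n -> {set X}).

Lemma support_of1 i : support_of C [:: i] = C i.
Proof. by rewrite /support_of big_cons big_nil setIT. Qed.

Lemma support_of2 i j : support_of C [:: i; j] = C i :&: C j.
Proof. by rewrite /support_of !big_cons big_nil setIT. Qed.

Lemma coboundaryB (w w' : cochain X O n) sigma :
  coboundary C (fun tau => w tau - w' tau) sigma =
  coboundary C w sigma - coboundary C w' sigma.
Proof.
by rewrite /coboundary -sumrB; apply: eq_bigr => j _; rewrite crestrB mulrzBl.
Qed.

Lemma coboundary_edge (w : cochain X O n) i j :
  coboundary C w [:: i; j] =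
  crestr (C i :&: C j) (w [:: j]) - crestr (C i :&: C j) (w [:: i]).
Proof.
rewrite /coboundary /= big_ord_recr /= big_ord_recr /= big_ord0 add0r.
by rewrite support_of2 /face /= expr0 expr1 mulr1z mulrN1z.
Qed.

Lemma coboundary_compatible_eq0 (g : 'I_n -> pf X O) :
  (forall i j, restr (C i :&: C j) (g i) = restr (C i :&: C j) (g j)) ->
  cochain_eq C 1 (coboundary C (cochain0_of g)) (fun _ => 0).
Proof.
move=> g_compat [|i [|j [|? ?]]] [//= _ _].
by rewrite coboundary_edge !crestr_gen g_compat subrr.
Qed.

End Coboundary.

Lemma gamma_zero_of_compatible_family (X O : finType) (R : realType) (n : nat)
    (C : 'I_n -> {set X}) (e : 'I_n -> {ffun pf X O -> R}) k s g :
  compatible_family C e k s g -> gamma_zero C e k s.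
Proof.
move=> [gk [gS g_compat]] fam fk fS f_compat.
exists (fun tau => cochain0_of fam tau - cochain0_of g tau); split.
  move=> [|i [|? ?]] [//= _ _]; rewrite support_of1; split.
    by move=> t /gen_subr_neq0 [] ->; [apply: fS | apply: gS].
  rewrite crestrB !crestr_gen f_compat -gk setIC g_compat.
  exact: gen_subr_eq0.
move=> sigma sigma_edge.
by rewrite coboundaryB (coboundary_compatible_eq0 _ g_compat sigma_edge) subr0.
Qed.

Theorem proposition6 (X O : finType) (R : realType) (n : nat)
    (C : 'I_n -> {set X}) (e : 'I_n -> {ffun pf X O -> R}) :
  \bigcup_(i < n) C i = [set: X] ->
  empirical_model C e ->
  (poss_extendable C e ->
     forall (k : 'I_n) (s : pf X O), Se C e (C k) s -> gamma_zero C e k s) /\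
  (~ strongly_contextual C e ->
     exists (k : 'I_n) (s : pf X O), Se C e (C k) s /\ gamma_zero C e k s).
Proof.
move=> _ _; split.
  move=> ext k s sS; have [g g_family] := ext k s sS.
  exact: gamma_zero_of_compatible_family g_family.
move=> not_sc; apply: NNPP => no_gamma_zero; apply: not_sc => k s sS [g g_family].
apply: no_gamma_zero; exists k, s; split => //.
exact: gamma_zero_of_compatible_family g_family.
Qed.
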